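(* Let $\mathcal{R}:\mathcal{D}\to\mathcal{S}$ be a deletion $(\varepsilon,\delta)$-DP local randomizer with reference distribution $\rho$. Then there exists a randomizer $\mathcal{R}':\mathcal{D}\to\mathcal{S}$ that is a deletion $\varepsilon$-DP local randomizer with the same reference distribution $\rho$, such that for all $x\in\mathcal{D}$, $\mathrm{TV}(\mathcal{R}(x),\mathcal{R}'(x))\le\delta$. In particular, $\mathcal{R}'$ is a (replacement) $2\varepsilon$-DP local randomizer.
   Context: Two random variables $P,Q$ on the same space are $(\varepsilon,\delta)$-indistinguishable if for every event $E$, $e^{-\varepsilon}(\Pr(Q\in E)-\delta)\le\Pr(P\in E)\le e^{\varepsilon}\Pr(Q\in E)+\delta$. An algorithm $\mathcal{R}:\mathcal{D}\to\mathcal{S}$ is a deletion $(\varepsilon,\delta)$-DP local randomizer if there exists a distribution $\rho$ on $\mathcal{S}$ (the reference distribution) such that for all $x\in\mathcal{D}$, $\mathcal{R}(x)$ and $\rho$ are $(\varepsilon,\delta)$-indistinguishable; deletion $\varepsilon$-DP means $\delta=0$. A (replacement) $(\varepsilon,\delta)$-DP local randomizer is one for which $\mathcal{R}(x)$ and $\mathcal{R}(x')$ are $(\varepsilon,\delta)$-indistinguishable for all $x,x'\in\mathcal{D}$. $\mathrm{TV}$ denotes total variation distance. *)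

From HB Require Import structures.
From mathcomp Require Import all_boot all_order all_algebra.
From mathcomp Require Import all_classical all_reals all_analysis.
Set Implicit Arguments. Unset Strict Implicit. Unset Printing Implicit Defensive.
Import Order.TTheory GRing.Theory Num.Theory.
Local Open Scope classical_set_scope.
Local Open Scope ring_scope.
Local Open Scope ereal_scope.

(* Output space S is an arbitrary measurable space T; distributions on S are
   probability measures on T; events are measurable sets. *)

Definition indist {R : realType} {d : measure_display} {T : measurableType d}
  (P Q : probability T R) (eps delta : R) : Prop :=
  forall E : set T, measurable E ->
    (expR (- eps))%:E * (Q E - delta%:E) <= P E /\
    P E <= (expR eps)%:E * Q E + delta%:E.

Definition TV {R : realType} {d : measure_display} {T : measurableType d}
  (P Q : probability T R) : \bar R :=
  ereal_sup [set `|P E - Q E| | E in [set E : set T | measurable E]].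

Definition deletion_ldp_ref {R : realType} {d : measure_display}
  {T : measurableType d} {D : Type}
  (M : D -> probability T R) (rho : probability T R) (eps delta : R) : Prop :=
  forall x : D, indist (M x) rho eps delta.

Definition replacement_ldp {R : realType} {d : measure_display}
  {T : measurableType d} {D : Type}
  (M : D -> probability T R) (eps delta : R) : Prop :=
  forall x x' : D, indist (M x) (M x') eps delta.

From HB Require Import structures.
From mathcomp Require Import all_boot all_order all_algebra.
From mathcomp Require Import all_classical all_reals all_analysis.
From mathcomp Require Import ring lra.

(* Write a = e^eps, b = e^-eps.  For each input x we replace P = M x by a
   probability Q that is pure-eps close to rho, i.e. b rho <= Q <= a rho on
   every event, and that is delta-close to P in total variation.

   Two Hahn decompositions (of P - a rho and P - b rho) split the space
   into S1 = {P > a rho}, the low zone {P < b rho} and the middle zone where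
   P already lies in the band.  The clipped measure
   K = a rho|S1 + b rho|low + P|middle lies in the band, and P - K (resp.
   K - P) is bounded by the excess of P on S1 (resp. its deficit on the low
   zone), both at most delta by assumption.  K has the wrong total mass C in
   general, so Q mixes it with a rho (if C <= 1) or with b rho (if C >= 1):
   the mixture stays in the band and moves away from K only in the
   direction that keeps the one-sided gap to P below delta, which, since P
   and Q have mass 1, bounds the total variation.
   Finally two measures pure-eps close to rho are pure-2eps close to each
   other, which gives the replacement guarantee. *)

Set Implicit Arguments.
Unset Strict Implicit.
Unset Printing Implicit Defensive.

Import Order.TTheory GRing.Theory Num.Theory.
Local Open Scope classical_set_scope.
Local Open Scope ring_scope.

Section real_facts.
Variable R : realType.

Lemma convex_between (lo hi x y t : R) :
  0 <= t <= 1 -> lo <= x <= hi -> lo <= y <= hi ->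
  lo <= (1 - t) * x + t * y <= hi.
Proof.
move=> /andP[t0 t1] /andP[xl xh] /andP[yl yh].
have t1' : 0 <= 1 - t by lra.
have h1 := ler_wpM2l t1' xl; have h2 := ler_wpM2l t1' xh.
have h3 := ler_wpM2l t0 yl; have h4 := ler_wpM2l t0 yh.
apply/andP; split; lra.
Qed.

Lemma mix_to_one (C c : R) : C <= 1 <= c \/ c <= 1 <= C ->
  exists2 t, 0 <= t <= 1 & (1 - t) * C + t * c = 1.
Proof.
move=> side; have [eq_cC|neq_cC] := eqVneq c C.
  have C1 : C = 1 by rewrite eq_cC in side; case: side => /andP[? ?]; lra.
  by exists 0; rewrite ?lexx ?ler01 // C1; ring.
have cC : c - C != 0 by rewrite subr_eq0.
exists ((1 - C) / (c - C)); last by field.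
case: side => /andP[h1 h2].
- have pos : 0 < c - C by rewrite lt_neqAle eq_sym cC /=; lra.
  by rewrite divr_ge0 /= ?ler_pdivrMr // ?mul1r; lra.
- have neg : c - C < 0 by rewrite lt_neqAle cC /=; lra.
  by rewrite -mulrNN -invrN divr_ge0 /= ?ler_pdivrMr ?mul1r; lra.
Qed.

End real_facts.

Section probability_facts.
Variables (R : realType) (d : measure_display) (T : measurableType d).
Implicit Types (P Q rho : probability T R) (E S : set T).

Definition pr P E : R := fine (P E).

Lemma prE P {E} : measurable E -> P E = (pr P E)%:E.
Proof. by move=> mE; rewrite /pr fineK // fin_num_measure. Qed.

Lemma pr_ge0 P E : 0 <= pr P E.
Proof. by rewrite /pr fine_ge0. Qed.

Lemma prT P : pr P setT = 1.
Proof. by rewrite /pr probability_setT. Qed.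

Lemma pr_setC P {E} : measurable E -> pr P (~` E) = 1 - pr P E.
Proof. by move=> mE; rewrite /pr probability_setC // (prE _ mE). Qed.

Lemma pr_split P {E S} : measurable E -> measurable S ->
  pr P E = pr P (E `&` S) + pr P (E `&` ~` S).
Proof.
move=> mE mS.
have mI : measurable (E `&` S) by exact: measurableI.
have mD : measurable (E `&` ~` S) by apply: measurableI => //; exact: measurableC.
have : P E = (P (E `&` S) + P (E `&` ~` S))%E.
  rewrite -measureU //; first by rewrite -setIUr setUCr setIT.
  by rewrite setIACA setICr setI0.
by rewrite (prE _ mE) (prE _ mI) (prE _ mD) -EFinD => -[].
Qed.

Lemma pr_split3 P {E S1 S2} : measurable E -> measurable S1 -> measurable S2 ->
  pr P E = pr P (E `&` S1) + pr P (E `&` (~` S1 `&` ~` S2))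
           + pr P (E `&` (~` S1 `&` S2)).
Proof.
move=> mE mS1 mS2.
have mES1 : measurable (E `&` ~` S1) by apply: measurableI => //; exact: measurableC.
rewrite (pr_split P mE mS1) (pr_split P mES1 mS2) !setIA.
lra.
Qed.

Lemma indist_real P Q (eps delta : R) :
  indist P Q eps delta <-> forall E, measurable E ->
    expR (- eps) * (pr Q E - delta) <= pr P E <= expR eps * pr Q E + delta.
Proof.
split=> H E mE; have := H E mE; rewrite (prE P mE) (prE Q mE).
  by rewrite -EFinB -EFinM -EFinM -EFinD !lee_fin => -[-> ->].
by rewrite -EFinB -EFinM -EFinM -EFinD !lee_fin => /andP.
Qed.

(* Between probabilities, a one-sided bound on P - Q over all events is a
   bound on |P - Q|, by passing to complements. *)
Lemma abs_le_of_onesided P Q (delta : R) :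
  (forall E, measurable E -> pr P E - pr Q E <= delta) ->
  forall E, measurable E -> `|pr P E - pr Q E| <= delta.
Proof.
move=> H E mE; have mCE := measurableC mE.
have h1 := H E mE; have h2 := H _ mCE.
rewrite (pr_setC P mE) (pr_setC Q mE) in h2.
by rewrite ler_norml; apply/andP; split; lra.
Qed.

Lemma TV_le P Q (delta : R) :
  (forall E, measurable E -> `|pr P E - pr Q E| <= delta) ->
  (TV P Q <= delta%:E)%E.
Proof.
move=> H; apply: ge_ereal_sup => _ [E mE <-].
by rewrite (prE P mE) (prE Q mE) -EFinB abse_EFin lee_fin; exact: H.
Qed.

Definition in_band rho (a b : R) Q : Prop :=
  forall E, measurable E -> b * pr rho E <= pr Q E <= a * pr rho E.

Lemma indist_of_band Q rho (eps : R) :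
  in_band rho (expR eps) (expR (- eps)) Q -> indist Q rho eps 0.
Proof.
by move=> band; apply/indist_real => E mE; rewrite subr0 addr0; exact: band.
Qed.

Lemma hahn_threshold P rho (c : R) : exists S, [/\ measurable S,
  forall E, measurable E -> E `<=` S -> c * pr rho E <= pr P E &
  forall E, measurable E -> E `<=` ~` S -> pr P E <= c * pr rho E].
Proof.
have [S [N [[mS posS] [mN negN] SUN _]]] := Hahn_decomposition
  (cadd (charge_of_finite_measure P) (cscale (- c) (charge_of_finite_measure rho))).
exists S; split=> // E mE sE.
  have : (0 <= P E + (- c)%:E * rho E)%E := posS E mE sE.
  rewrite (prE P mE) (prE rho mE).
  by rewrite -EFinM -EFinD lee_fin; lra.
have sN : E `<=` N.
  move=> x Ex; have : (S `|` N) x by rewrite SUN.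
  by case=> // /(sE x Ex).
have : (P E + (- c)%:E * rho E <= 0)%E := negN E mE sN.
rewrite (prE P mE) (prE rho mE).
by rewrite -EFinM -EFinD lee_fin; lra.
Qed.

Definition clip P rho (a b : R) (A B M : set T) (E : set T) : R :=
  a * pr rho (E `&` A) + b * pr rho (E `&` B) + pr P (E `&` M).

Lemma clip_mixture_prob P rho (a b : R) (A B M : set T) (s u : R) :
  measurable A -> measurable B -> measurable M ->
  0 <= a -> 0 <= b -> 0 <= s -> 0 <= u ->
  s * clip P rho a b A B M setT + u = 1 ->
  exists Q : probability T R, forall E, measurable E ->
    pr Q E = s * clip P rho a b A B M E + u * pr rho E.
Proof.
move=> mA mB mM a0 b0 s0 u0 mass1.
have sa0 : 0 <= s * a by exact: mulr_ge0.
have sb0 : 0 <= s * b by exact: mulr_ge0.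
pose mu := measure_add
  (measure_add (mscale (NngNum sa0) (mrestr rho mA))
               (mscale (NngNum sb0) (mrestr rho mB)))
  (measure_add (mscale (NngNum s0) (mrestr P mM)) (mscale (NngNum u0) rho)).
have muE E : measurable E ->
    mu E = (s * clip P rho a b A B M E + u * pr rho E)%:E.
  move=> mE; rewrite /mu /measure_add /msum !big_ord_recl !big_ord0 /=.
  rewrite /msum !big_ord_recl !big_ord0 /= !adde0 /mscale /= /mrestr.
  rewrite (prE rho (measurableI _ _ mE mA)) (prE rho (measurableI _ _ mE mB)).
  rewrite (prE P (measurableI _ _ mE mM)) (prE rho mE) -!EFinM -!EFinD.
  by congr EFin; rewrite /clip; ring.
have normE (nu : {measure set T -> \bar R}) U :
    nu setT = 1%E -> mnormalize nu rho U = nu U.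
  by move=> nuT; rewrite /mnormalize nuT /= onee_eq0 /= invr1 mule1.
have muT : mu setT = 1%E by rewrite muE // prT mulr1 mass1.
exists (mnormalize mu rho) => E mE.
by rewrite /pr /= normE //; exact: (congr1 fine (muE _ mE)).
Qed.

Section clipping.
Variables (P rho : probability T R) (a b : R) (S1 S2 : set T).
Hypotheses (mS1 : measurable S1) (mS2 : measurable S2).
Hypotheses (b_ge0 : 0 <= b) (b_le_a : b <= a).

Hypothesis above_S1 : forall E, measurable E -> E `<=` S1 -> a * pr rho E <= pr P E.
Hypothesis below_S1 : forall E, measurable E -> E `<=` ~` S1 -> pr P E <= a * pr rho E.
Hypothesis above_S2 : forall E, measurable E -> E `<=` S2 -> b * pr rho E <= pr P E.
Hypothesis below_S2 : forall E, measurable E -> E `<=` ~` S2 -> pr P E <= b * pr rho E.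

(* Where P is too small relative to b rho, and where it lies in the band. *)
Let low := ~` S1 `&` ~` S2.
Let mid := ~` S1 `&` S2.
Let mlow : measurable low. Proof. by apply: measurableI; exact: measurableC. Qed.
Let mmid : measurable mid. Proof. by apply: measurableI => //; exact: measurableC. Qed.

Local Notation K := (clip P rho a b S1 low mid).

Lemma clip_band E : measurable E -> b * pr rho E <= K E <= a * pr rho E.
Proof.
move=> mE; rewrite /clip (pr_split3 rho mE mS1 mS2) -/low -/mid.
have mEmid := measurableI _ _ mE mmid.
have mid_lo := above_S2 mEmid (fun x => fun h => (proj2 (proj2 h))).
have mid_hi := below_S1 mEmid (fun x => fun h => (proj1 (proj2 h))).
have high_ba := ler_wpM2r (pr_ge0 rho (E `&` S1)) b_le_a.
have low_ba := ler_wpM2r (pr_ge0 rho (E `&` low)) b_le_a.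
by apply/andP; split; lra.
Qed.

Lemma P_sub_clip E : measurable E ->
  pr P E - K E <= pr P S1 - a * pr rho S1.
Proof.
move=> mE; rewrite /clip (pr_split3 P mE mS1 mS2) -/low -/mid.
have mElow := measurableI _ _ mE mlow.
have low_hi := below_S2 mElow (fun x => fun h => (proj2 (proj2 h))).
have mS1E := measurableI _ _ mS1 (measurableC mE).
have rest := above_S1 mS1E (fun x => fun h => proj1 h).
rewrite (pr_split P mS1 mE) (pr_split rho mS1 mE) !(setIC S1 E).
lra.
Qed.

Lemma clip_sub_P E : measurable E ->
  K E - pr P E <= b * pr rho low - pr P low.
Proof.
move=> mE; rewrite /clip (pr_split3 P mE mS1 mS2) -/low -/mid.
have high_lo := above_S1 (measurableI _ _ mE mS1) (fun x => fun h => proj2 h).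
have mlowE := measurableI _ _ mlow (measurableC mE).
have rest := below_S2 mlowE (fun x => fun h => proj2 (proj1 h)).
rewrite (pr_split P mlow mE) (pr_split rho mlow mE) !(setIC low E).
lra.
Qed.

Lemma scaled_in_band c E : b <= c <= a ->
  b * pr rho E <= c * pr rho E <= a * pr rho E.
Proof. by case/andP=> bc ca; rewrite !ler_wpM2r ?pr_ge0. Qed.

Lemma clip_mixture c t : b <= c <= a -> 0 <= t <= 1 ->
  (1 - t) * K setT + t * c = 1 ->
  exists Q : probability T R, forall E, measurable E ->
    pr Q E = (1 - t) * K E + t * (c * pr rho E).
Proof.
move=> /andP[bc ca] /andP[t0 t1] mass1.
have s0 : 0 <= 1 - t by rewrite subr_ge0.
have [Q QE] := clip_mixture_prob mS1 mlow mmid (le_trans b_ge0 (le_trans bc ca))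
  b_ge0 s0 (mulr_ge0 t0 (le_trans b_ge0 bc)) mass1.
by exists Q => E mE; rewrite QE // mulrA.
Qed.

(* If K has mass at most 1, topping it up with a rho gives a probability in
   the band that only exceeds K, so P - Q is controlled by the excess on S1. *)
Lemma mixture_up : K setT <= 1 -> 1 <= a ->
  exists Q : probability T R, in_band rho a b Q /\
    forall E, measurable E -> pr P E - pr Q E <= pr P S1 - a * pr rho S1.
Proof.
move=> K1 a1; have aa : b <= a <= a by rewrite lexx b_le_a.
have [t t01 mass1] : exists2 t, 0 <= t <= 1 & (1 - t) * K setT + t * a = 1.
  by apply: mix_to_one; left; rewrite K1 a1.
have [Q QE] := clip_mixture aa t01 mass1.
exists Q; split=> [E mE|E mE]; have /andP[_ Ka] := clip_band mE.
  by rewrite QE // convex_between // ?clip_band ?scaled_in_band.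
have /andP[KQ _] : K E <= pr Q E <= a * pr rho E.
  by rewrite QE // convex_between // ?lexx ?Ka.
by have := P_sub_clip mE; lra.
Qed.

(* Symmetrically, if K has mass at least 1, diluting it with b rho gives a
   probability in the band below K, so Q - P is controlled by the deficit
   on the low zone. *)
Lemma mixture_down : 1 <= K setT -> b <= 1 ->
  exists Q : probability T R, in_band rho a b Q /\
    forall E, measurable E -> pr Q E - pr P E <= b * pr rho low - pr P low.
Proof.
move=> K1 b1; have bb : b <= b <= a by rewrite lexx b_le_a.
have [t t01 mass1] : exists2 t, 0 <= t <= 1 & (1 - t) * K setT + t * b = 1.
  by apply: mix_to_one; right; rewrite K1 b1.
have [Q QE] := clip_mixture bb t01 mass1.
exists Q; split=> [E mE|E mE]; have /andP[bK _] := clip_band mE.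
  by rewrite QE // convex_between // ?clip_band ?scaled_in_band.
have /andP[_ QK] : b * pr rho E <= pr Q E <= K E.
  by rewrite QE // convex_between // ?lexx ?bK.
by have := clip_sub_P mE; lra.
Qed.

End clipping.

Lemma purify P rho (eps delta : R) : 0 <= eps -> 0 <= delta ->
  indist P rho eps delta ->
  exists Q : probability T R, indist Q rho eps 0 /\
    forall E, measurable E -> `|pr P E - pr Q E| <= delta.
Proof.
move=> eps0 delta0 /indist_real close.
set a := expR eps; set b := expR (- eps).
have a1 : 1 <= a by have := expR_ge1Dx eps; rewrite -/a; lra.
have b1 : b <= 1 by rewrite /b expR_le1; lra.
have b0 : 0 <= b by exact: expR_ge0.
have ba : b <= a by exact: le_trans b1 a1.
have [S1 [mS1 above_S1 below_S1]] := hahn_threshold P rho a.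
have [S2 [mS2 above_S2 below_S2]] := hahn_threshold P rho b.
have mlow : measurable (~` S1 `&` ~` S2) by apply: measurableI; exact: measurableC.
have excess : pr P S1 - a * pr rho S1 <= delta.
  by have /andP[_] := close S1 mS1; rewrite -/a; lra.
have deficit : b * pr rho (~` S1 `&` ~` S2) - pr P (~` S1 `&` ~` S2) <= delta.
  have /andP[+ _] := close _ mlow; rewrite -/b.
  by have := ler_wpM2r delta0 b1; lra.
have [K1|K1] := lerP (clip P rho a b S1 (~` S1 `&` ~` S2) (~` S1 `&` S2) setT) 1.
- have [Q [band PQ]] := mixture_up mS1 mS2 b0 ba above_S1 below_S1 above_S2
    below_S2 K1 a1.
  exists Q; split; first exact: indist_of_band.
  have P_sub_Q E : measurable E -> pr P E - pr Q E <= delta.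
    by move=> mE; have := PQ E mE; lra.
  exact: abs_le_of_onesided P_sub_Q.
- have [Q [band QP]] := mixture_down mS1 mS2 b0 ba above_S1 below_S1 above_S2
    below_S2 (ltW K1) b1.
  exists Q; split; first exact: indist_of_band.
  have Q_sub_P E : measurable E -> pr Q E - pr P E <= delta.
    by move=> mE; have := QP E mE; lra.
  by move=> E mE; rewrite distrC; exact: abs_le_of_onesided Q_sub_P E mE.
Qed.

Lemma indist_pure_trans Q1 Q2 rho (eps : R) :
  indist Q1 rho eps 0 -> indist Q2 rho eps 0 -> indist Q1 Q2 (2 * eps) 0.
Proof.
move=> /indist_real H1 /indist_real H2; apply/indist_real => E mE.
have /andP[lo1 hi1] := H1 E mE; have /andP[lo2 hi2] := H2 E mE.
rewrite !subr0 !addr0 in lo1 hi1 lo2 hi2 *.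
set a := expR eps in hi1 hi2 *; set b := expR (- eps) in lo1 lo2 *.
have ab : a * b = 1 by exact: expRxMexpNx_1.
have a0 : 0 <= a by exact: expR_ge0.
have b0 : 0 <= b by exact: expR_ge0.
have -> : expR (2 * eps) = a * a by rewrite -expRD; congr expR; ring.
have -> : expR (- (2 * eps)) = b * b by rewrite -expRD; congr expR; ring.
have rho_le : pr rho E <= a * pr Q2 E.
  by have := ler_wpM2l a0 lo2; rewrite mulrA ab mul1r.
apply/andP; split.
- have := ler_wpM2l b0 hi2; rewrite mulrA (mulrC b a) ab mul1r => Q2_le.
  have := ler_wpM2l b0 Q2_le; rewrite mulrA => bbQ2.
  lra.
- have := ler_wpM2l a0 rho_le; rewrite mulrA; lra.
Qed.

End probability_facts.

Local Open Scope ereal_scope.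

Theorem lemma3p7 (R : realType) (d : measure_display) (T : measurableType d)
  (D : Type) (M : D -> probability T R) (rho : probability T R) (eps delta : R) :
  (0 <= eps)%R -> (0 <= delta)%R ->
  deletion_ldp_ref M rho eps delta ->
  exists M' : D -> probability T R,
    deletion_ldp_ref M' rho eps 0 /\
    (forall x : D, TV (M x) (M' x) <= delta%:E) /\
    replacement_ldp M' (2 * eps) 0.
Proof.
move=> eps0 delta0 ldp.
have [M' pureM'] := choice (fun x => purify eps0 delta0 (ldp x)).
exists M'; split; [|split].
- by move=> x; exact: (pureM' x).1.
- by move=> x; apply: TV_le; exact: (pureM' x).2.
- by move=> x x'; apply: indist_pure_trans; [exact: (pureM' x).1 | exact: (pureM' x').1].
Qed.
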